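(* Let $(X,\wedge,\vee,\bot,\top)$ be a bounded lattice which is not distributive. Then there exists a sequence $x=(x_1,x_2,x_3)$ of elements of $X$ such that the identity $$P_3(k)=P_{2}(k)\wedge\bigl(P_{2}(k-1)\vee x_3\bigr)$$ fails for some $k\in\{1,2,3\}$, where for $0\le m\le 3$ and $0\le k\le m+1$ $$P_m(k)=\begin{cases}\bot & k=0,\\ \bigwedge_{I\subseteq\{1,\ldots,m\},\ |I|=k}\ \bigvee_{i\in I} x_i & 1\le k\le m,\\ \top & k=m+1.\end{cases}$$
   Context: $\bot$ and $\top$ denote the least and greatest elements of $X$. For $1\le k\le m$, $P_m(k)$ is the $k$-th element of $(x_1,\ldots,x_m)$ sorted with respect to the lattice (meet over $k$-element index subsets of the join of the corresponding entries). *)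

From mathcomp Require Import all_boot all_order.
Set Implicit Arguments. Unset Strict Implicit. Unset Printing Implicit Defensive.
Import Order.TTheory.
Local Open Scope order_scope.

Definition lattice_distributive d (X : latticeType d) : Prop :=
  forall a b c : X, a `&` (b `|` c) = (a `&` b) `|` (a `&` c).

(* P m x k for the sequence (x 1, ..., x m) (1-based indexing: the entry x_i
   is [x i]; values of x outside 1..m are irrelevant). *)
Definition P d (X : tbLatticeType d) (m : nat) (x : nat -> X) (k : nat) : X :=
  if k == 0%N then \bot
  else if (k <= m)%N then
    \meet_(I : {set 'I_m} | #|I| == k) \join_(i in I) x (val i).+1
  else \top.

From mathcomp Require Import all_boot all_order.
From Stdlib Require Import Classical.
Import Order.TTheory.
Local Open Scope order_scope.

(* For k = 2 the identity reads
     (a | b) & (a | c) & (b | c) = (a | b) & ((a & b) | c)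
   with (a, b, c) = (x_1, x_2, x_3).  Already for c <= a this forces the
   modular law, and the median on the left then dominates a & (b | c), which
   modularity splits into (a & b) | (a & c): the lattice is distributive. *)

Lemma le_meet3 d (L : latticeType d) (A B C D : L) : D \in [:: A; B; C] -> A `&` (B `&` C) <= D.
Proof.
rewrite !inE => /or3P[] /eqP ->.
- exact: leIl.
- exact: le_trans (leIr _ _) (leIl _ _).
- exact: le_trans (leIr _ _) (leIr _ _).
Qed.

Section MedianIdentity.
Variables (d : Order.disp_t) (L : latticeType d).

Definition median_identity : Prop :=
  forall a b c : L,
    (a `|` b) `&` ((a `|` c) `&` (b `|` c)) = (a `|` b) `&` ((a `&` b) `|` c).

Hypothesis median_id : median_identity.

Lemma modular_of_median_identity (a b c : L) :
  c <= a -> a `&` (b `|` c) = (a `&` b) `|` c.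
Proof.
move=> le_ca; have := median_id a b c.
rewrite (join_l le_ca) meetA (meet_r (leUl a b)) => ->.
rewrite meet_r // leUx (le_trans (leIl a b) (leUl a b)).
exact: le_trans le_ca (leUl a b).
Qed.

Lemma distributive_of_median_identity : lattice_distributive L.
Proof.
have modular := modular_of_median_identity.
move=> a b c; apply/le_anti/andP; split; last first.
  by rewrite leUx !lexI !leIl !(le_trans (leIr _ _)) ?leUl ?leUr.
have le_median : a `&` (b `|` c) <= (a `|` b) `&` ((a `|` c) `&` (b `|` c)).
  by rewrite !lexI leIr andbT !(le_trans (leIl _ _)) ?leUl.
have le_ab_aub : a `&` b <= a `|` b by rewrite (le_trans (leIl a b)) ?leUl.
rewrite median_id (joinC (a `&` b)) (modular _ c _ le_ab_aub) in le_median.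
have : a `&` (b `|` c) <= a `&` (((a `|` b) `&` c) `|` (a `&` b)).
  by rewrite lexI leIl le_median.
by rewrite (modular a _ _ (leIl a b)) meetA (meet_l (leUl a b)) (joinC (a `&` c)).
Qed.

End MedianIdentity.

Section SmallRanks.
Variables (d : Order.disp_t) (X : tbLatticeType d) (x : nat -> X).

Lemma P_le m k (I : {set 'I_m}) (u : X) :
  k != 0%N -> #|I| = k -> \join_(i in I) x (val i).+1 <= u -> P m x k <= u.
Proof.
move=> k_neq0 cardI; rewrite /P (negPf k_neq0).
have -> : (k <= m)%N by rewrite -cardI -[m in (_ <= m)%N]card_ord max_card.
by apply: meets_max; rewrite cardI.
Qed.

Lemma le_P m k (y : X) :
  (0 < k <= m)%N ->
  (forall I : {set 'I_m}, #|I| = k -> y <= \join_(i in I) x (val i).+1) ->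
  y <= P m x k.
Proof.
case/andP=> k_gt0 le_km le_joins; rewrite /P (gtn_eqF k_gt0) le_km.
by apply/meetsP => I /eqP; apply: le_joins.
Qed.

Lemma join_set2 m (i j : 'I_m) :
  \join_(l in [set i; j]) x (val l).+1 = x (val i).+1 `|` x (val j).+1.
Proof. by rewrite joins_setU !big_set1. Qed.

Lemma P2_1 : P 2 x 1 = x 1%N `&` x 2%N.
Proof.
apply/le_anti/andP; split.
  rewrite lexI; apply/andP; split.
  - by apply: (@P_le _ _ [set @Ordinal 2 0 isT]); rewrite ?cards1 ?big_set1.
  - by apply: (@P_le _ _ [set @Ordinal 2 1 isT]); rewrite ?cards1 ?big_set1.
apply: le_P => // I /eqP /cards1P [[[|[|i]] ?] ->] //=.
all: by rewrite big_set1 ?leIl ?leIr.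
Qed.

Lemma P2_2 : P 2 x 2 = x 1%N `|` x 2%N.
Proof.
apply/le_anti/andP; split.
  by apply: (@P_le _ _ [set @Ordinal 2 0 isT; @Ordinal 2 1 isT]);
    rewrite ?cards2 ?join_set2.
apply: le_P => // I /eqP /cards2P [i [j [i_neq_j ->]]].
rewrite join_set2; move: i_neq_j.
by case: i => [[|[|[|i]]] ?]; case: j => [[|[|[|j]]] ?] //= _; rewrite joinC.
Qed.

Lemma P3_2 :
  P 3 x 2 = (x 1%N `|` x 2%N) `&` ((x 1%N `|` x 3%N) `&` (x 2%N `|` x 3%N)).
Proof.
apply/le_anti/andP; split.
  rewrite !lexI; apply/and3P; split.
  - by apply: (@P_le _ _ [set @Ordinal 3 0 isT; @Ordinal 3 1 isT]);
      rewrite ?cards2 ?join_set2.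
  - by apply: (@P_le _ _ [set @Ordinal 3 0 isT; @Ordinal 3 2 isT]);
      rewrite ?cards2 ?join_set2.
  - by apply: (@P_le _ _ [set @Ordinal 3 1 isT; @Ordinal 3 2 isT]);
      rewrite ?cards2 ?join_set2.
apply: le_P => // I /eqP /cards2P [i [j [i_neq_j ->]]].
rewrite join_set2; move: i_neq_j.
case: i => [[|[|[|[|i]]]] ?]; case: j => [[|[|[|[|j]]]] ?] //= _.
all: by [apply: le_meet3; rewrite !inE eqxx ?orbT
        | rewrite [RHS in _ <= RHS]joinC; apply: le_meet3; rewrite !inE eqxx ?orbT].
Qed.

End SmallRanks.

Theorem proposition3p2 (d : Order.disp_t) (X : tbLatticeType d) :
  ~ lattice_distributive X ->
  exists x : nat -> X, exists k : nat,
    (1 <= k <= 3)%N /\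
    P 3 x k <> P 2 x k `&` (P 2 x k.-1 `|` x 3%N).
Proof.
move=> not_distr; apply: NNPP => no_failure; apply: not_distr.
apply: distributive_of_median_identity => a b c; apply: NNPP => median_neq.
apply: no_failure.
exists (fun n => match n with 1 => a | 2 => b | _ => c end), 2%N; split => //.
by rewrite /= P3_2 P2_2 P2_1.
Qed.
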